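(* Let $M \ge 1$ be an integer, let $d>0$ be the antenna element spacing and $\lambda>0$ the wavelength of an $M$-element one-dimensional uniform linear array, and let $\mathcal{T}$ be a (measurable) set of possible angles of departure. Put $$\mathcal{P} = \left\{ \psi : \psi = 2\pi \tfrac{d}{\lambda}\sin(\theta),\ \theta\in\mathcal{T}\right\}, \qquad \mu(\mathcal{P}) = \int_{-\pi}^{\pi} \mathbf{1}(\psi\in\mathcal{P})\, d\psi ,$$ and let the array manifold be $\mathcal{A}=\{\mathbf{a}(\psi):\psi\in\mathcal{P}\}$ with $\mathbf{a}(\psi) = [1,\ e^{j\psi},\ \ldots,\ e^{j(M-1)\psi}]^T\in\mathbb{C}^M$. Let $\mathcal{F}_k=\{\mathbf{f}_1,\ldots,\mathbf{f}_{N_k}\}\subset\mathbb{C}^M$ be any codebook of $N_k$ unit-norm vectors (in particular, any subcodebook of analog beamformers whose entries are $\frac{1}{\sqrt M}e^{j\varphi_m}$ with quantized phases $\varphi_m$). Define $$\chi(\mathcal{F}_k) = \inf_{\mathbf{a}\in\mathcal{A}}\ \max_{\mathbf{f}\in\mathcal{F}_k} |\mathbf{f}^*\mathbf{a}|^2 ,$$ where, in computing the infimum, only $\psi\in\mathcal{P}\cap[-\pi,\pi]$ are considered. Then $$\chi(\mathcal{F}_k) \le \min\left( \frac{2\pi N_k}{\mu(\mathcal{P})},\ M\right),$$ with the convention $2\pi N_k/0=+\infty$.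
   Context: $\mathbf{f}^*$ denotes the conjugate transpose of $\mathbf{f}$, $\|\cdot\|$ the Euclidean norm, $j=\sqrt{-1}$, and $\mathbf{1}(\cdot)$ the indicator function. The quantity $\chi(\mathcal{F}_k)$ is the smallest (worst-case over directions in the array manifold) beamforming gain achievable by the best codeword of $\mathcal{F}_k$; the associated covering distance is $\delta(\mathcal{F}_k)=\sqrt{1-\chi(\mathcal{F}_k)/M}$. *)

From Stdlib Require Import Reals Lra.
Open Scope R_scope.

(* Complex vectors in C^M are represented by their real and imaginary parts,
   indexed by m = 0 .. M-1. *)

Definition sqnorm (M : nat) (fre fim : nat -> R) : R :=
  sum_f_R0 (fun m => fre m ^ 2 + fim m ^ 2) (M - 1).

(* |f^* a(psi)|^2 where a(psi) = [1, e^{j psi}, ..., e^{j (M-1) psi}]^T :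
   f^* a = sum_m (fre m - j fim m)(cos(m psi) + j sin(m psi)). *)
Definition gain (M : nat) (fre fim : nat -> R) (psi : R) : R :=
  (sum_f_R0 (fun m => fre m * cos (INR m * psi) + fim m * sin (INR m * psi)) (M - 1)) ^ 2
  + (sum_f_R0 (fun m => fre m * sin (INR m * psi) - fim m * cos (INR m * psi)) (M - 1)) ^ 2.

Fixpoint maxgain (M : nat) (Fre Fim : nat -> nat -> R) (N : nat) (psi : R) : R :=
  match N with
  | O => 0
  | S n => Rmax (maxgain M Fre Fim n psi) (gain M (Fre n) (Fim n) psi)
  end.

Definition Pset (d lambda : R) (T : R -> Prop) (psi : R) : Prop :=
  exists theta, T theta /\ psi = 2 * PI * (d / lambda) * sin theta.

Definition cover_sum (A : R -> Prop) (s : R) : Prop :=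
  exists a b : nat -> R,
    (forall n, a n <= b n) /\
    (forall x, A x -> exists n, a n < x < b n) /\
    infinite_sum (fun n => b n - a n) s.

Definition outer_measure (A : R -> Prop) (m : R) : Prop :=
  (forall s, cover_sum A s -> m <= s) /\
  (forall eps, 0 < eps -> exists s, cover_sum A s /\ s < m + eps).

Definition lebesgue_measurable (T : R -> Prop) : Prop :=
  forall eps, 0 < eps ->
    exists G : R -> Prop, open_set G /\ (forall x, T x -> G x) /\
      exists s, cover_sum (fun x => G x /\ ~ T x) s /\ s < eps.

Definition is_inf (S : R -> Prop) (x : R) : Prop :=
  (forall y, S y -> x <= y) /\ (forall z, (forall y, S y -> z <= y) -> z <= x).

(* Write G_f(psi) = |f^* a(psi)|^2 for the gain of a unit-norm beam f.
   The bound chi <= M is Cauchy-Schwarz: G_f(psi) <= M |f|^2 = M.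

   For the bound mu chi <= 2 pi N the idea is a discrete Parseval identity:
   on a grid of K >= M equally spaced directions psi_k = -pi + 2 pi k / K
   the characters e^{j m psi} (m < M) are orthogonal, so
   sum_k G_f(psi_k) = K |f|^2, and the total gain of the N codewords over the
   grid is exactly N K.  Since the best-codeword gain is at least chi on the
   set S = P /\ [-pi, pi] and the total gain is Lipschitz with some constant
   L, every point of S lies in a grid cell whose left end carries total gain
   at least chi - 2 pi L / K; at most N K / (chi - 2 pi L / K) cells qualify,
   each of length 2 pi / K, so mu (chi - 2 pi L / K) <= 2 pi N.  Letting
   K -> oo gives mu chi <= 2 pi N.

   Only the outer measure of S enters
   the argument. *)

From Stdlib Require Import Reals Lra Lia Arith.
Open Scope R_scope.

(* Unlike sum_f_R0
   (which sums n+1 terms) this has a natural empty sum, which keeps the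
   bookkeeping for codebooks, antenna indices and grids uniform. *)
Fixpoint fsum (n : nat) (f : nat -> R) : R :=
  match n with O => 0 | S n' => fsum n' f + f n' end.

Lemma sum_f_R0_fsum (f : nat -> R) (n : nat) : sum_f_R0 f n = fsum (S n) f.
Proof. induction n as [|n IH]; simpl in *; [ring | rewrite IH; simpl; ring]. Qed.

Lemma fsum_ext (n : nat) (f g : nat -> R) :
  (forall i, (i < n)%nat -> f i = g i) -> fsum n f = fsum n g.
Proof. induction n as [|n IH]; intros H; simpl; [ring | rewrite IH, H; auto]. Qed.

Lemma fsum_plus (n : nat) (f g : nat -> R) :
  fsum n (fun i => f i + g i) = fsum n f + fsum n g.
Proof. induction n as [|n IH]; simpl; [ring | rewrite IH; ring]. Qed.

Lemma fsum_minus (n : nat) (f g : nat -> R) :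
  fsum n (fun i => f i - g i) = fsum n f - fsum n g.
Proof. induction n as [|n IH]; simpl; [ring | rewrite IH; ring]. Qed.

Lemma fsum_scal (n : nat) (c : R) (f : nat -> R) :
  fsum n (fun i => c * f i) = c * fsum n f.
Proof. induction n as [|n IH]; simpl; [ring | rewrite IH; ring]. Qed.

Lemma fsum_const (n : nat) (c : R) : fsum n (fun _ => c) = INR n * c.
Proof. induction n as [|n IH]; simpl fsum; [simpl; ring | rewrite IH, S_INR; ring]. Qed.

Lemma fsum_le (n : nat) (f g : nat -> R) :
  (forall i, (i < n)%nat -> f i <= g i) -> fsum n f <= fsum n g.
Proof.
  induction n as [|n IH]; intros H; simpl; [lra|].
  apply Rplus_le_compat; auto.
Qed.

Lemma fsum_nonneg (n : nat) (f : nat -> R) :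
  (forall i, (i < n)%nat -> 0 <= f i) -> 0 <= fsum n f.
Proof. intros H. rewrite <- (Rmult_0_r (INR n)), <- fsum_const. apply fsum_le; auto. Qed.

Lemma fsum_abs (n : nat) (f : nat -> R) : Rabs (fsum n f) <= fsum n (fun i => Rabs (f i)).
Proof.
  induction n as [|n IH]; simpl; [rewrite Rabs_R0; lra|].
  eapply Rle_trans; [apply Rabs_triang | lra].
Qed.

Lemma fsum_swap (n m : nat) (f : nat -> nat -> R) :
  fsum n (fun i => fsum m (fun j => f i j)) = fsum m (fun j => fsum n (fun i => f i j)).
Proof.
  induction n as [|n IH]; simpl.
  - change (0 = fsum m (fun _ => 0)). rewrite fsum_const. ring.
  - rewrite IH, <- fsum_plus. reflexivity.
Qed.

Lemma fsum_mul (n : nat) (f g : nat -> R) :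
  fsum n f * fsum n g = fsum n (fun i => fsum n (fun j => f i * g j)).
Proof.
  rewrite Rmult_comm, <- fsum_scal.
  apply fsum_ext; intros i _. rewrite Rmult_comm, <- fsum_scal. reflexivity.
Qed.

Lemma fsum_delta (n i : nat) (g : nat -> R) : (i < n)%nat ->
  fsum n (fun j => if Nat.eq_dec i j then g j else 0) = g i.
Proof.
  induction n as [|n IH]; intros Hi; simpl; [lia|].
  destruct (Nat.eq_dec i n) as [->|Hne].
  - rewrite (fsum_ext n _ (fun _ => 0)), fsum_const; [ring|].
    intros k Hk. destruct (Nat.eq_dec n k); [lia | reflexivity].
  - rewrite IH by lia. ring.
Qed.

Lemma infinite_sum_fsum (f : nat -> R) (K : nat) :
  (forall n, (K <= n)%nat -> f n = 0) -> infinite_sum f (fsum K f).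
Proof.
  intros Hf eps Heps. exists K. intros n Hn.
  assert (Htail : forall p, fsum (K + p) f = fsum K f).
  { induction p as [|p IH]; [now rewrite Nat.add_0_r|].
    rewrite Nat.add_succ_r. simpl. rewrite IH, Hf by lia. ring. }
  rewrite sum_f_R0_fsum. replace (S n) with (K + (S n - K))%nat by lia.
  rewrite Htail. unfold R_dist. rewrite Rminus_diag, Rabs_R0. lra.
Qed.

(* Cauchy-Schwarz for the all-ones vector:
   n * sum x_i^2 - (sum x_i)^2 = 1/2 * sum_{i,j} (x_i - x_j)^2 >= 0. *)
Lemma sqr_fsum_le (n : nat) (x : nat -> R) :
  fsum n x ^ 2 <= INR n * fsum n (fun i => x i ^ 2).
Proof.
  assert (Hpairs : fsum n (fun i => fsum n (fun j => (x i - x j) ^ 2))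
                   = 2 * (INR n * fsum n (fun i => x i ^ 2)) - 2 * fsum n x ^ 2).
  { rewrite (fsum_ext n _ (fun i => fsum n (fun j => x i ^ 2 + x j ^ 2)
                                  - 2 * fsum n (fun j => x i * x j))).
    - rewrite fsum_minus, fsum_scal, <- fsum_mul, fsum_swap.
      rewrite (fsum_ext n _ (fun j => fsum n (fun i => x i ^ 2) + INR n * x j ^ 2)).
      + rewrite fsum_plus, fsum_scal, fsum_const. ring.
      + intros j _. rewrite fsum_plus, fsum_const. reflexivity.
    - intros i _. rewrite <- fsum_scal, <- fsum_minus. apply fsum_ext; intros; ring. }
  assert (0 <= fsum n (fun i => fsum n (fun j => (x i - x j) ^ 2))).
  { apply fsum_nonneg; intros. apply fsum_nonneg; intros. apply pow2_ge_0. }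
  lra.
Qed.


(* Telescoping identities (Dirichlet-kernel trick): multiplying a sum of
   equally spaced cosines or sines by 2 sin(t/2) makes it collapse. *)
Lemma cos_grid_telescope (K : nat) (a t : R) :
  2 * sin (t / 2) * fsum K (fun k => cos (a + INR k * t)) =
  sin (a + INR K * t - t / 2) - sin (a - t / 2).
Proof.
  induction K as [|K IH]; simpl fsum.
  - replace (a + INR 0 * t - t / 2) with (a - t / 2) by (simpl; ring). ring.
  - rewrite Rmult_plus_distr_l, IH, S_INR.
    replace (a + (INR K + 1) * t - t / 2) with ((a + INR K * t) + t / 2) by field.
    replace (a + INR K * t - t / 2) with ((a + INR K * t) - t / 2) by field.
    rewrite (sin_plus (a + INR K * t)), (sin_minus (a + INR K * t)). ring.
Qed.

Lemma sin_grid_telescope (K : nat) (a t : R) :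
  2 * sin (t / 2) * fsum K (fun k => sin (a + INR k * t)) =
  cos (a - t / 2) - cos (a + INR K * t - t / 2).
Proof.
  induction K as [|K IH]; simpl fsum.
  - replace (a + INR 0 * t - t / 2) with (a - t / 2) by (simpl; ring). ring.
  - rewrite Rmult_plus_distr_l, IH, S_INR.
    replace (a + (INR K + 1) * t - t / 2) with ((a + INR K * t) + t / 2) by field.
    replace (a + INR K * t - t / 2) with ((a + INR K * t) - t / 2) by field.
    rewrite (cos_plus (a + INR K * t)), (cos_minus (a + INR K * t)). ring.
Qed.

Lemma sin_cos_shift_2PI (x : R) (m m' : nat) :
  sin (x + 2 * PI * (INR m - INR m')) = sin x /\
  cos (x + 2 * PI * (INR m - INR m')) = cos x.
Proof.
  replace (x + 2 * PI * (INR m - INR m')) with ((x - 2 * INR m' * PI) + 2 * INR m * PI) by ring.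
  rewrite sin_period, cos_period.
  rewrite <- (sin_period (x - 2 * INR m' * PI) m'), <- (cos_period (x - 2 * INR m' * PI) m').
  replace (x - 2 * INR m' * PI + 2 * INR m' * PI) with x by ring. auto.
Qed.

Lemma sin_PI_frac_neq0 (q : R) : 0 < Rabs q < 1 -> sin (PI * q) <> 0.
Proof.
  pose proof PI_RGT_0 as Hpi. intros Hq.
  assert (Hpos : forall r, 0 < r < 1 -> 0 < sin (PI * r)).
  { intros r Hr. apply sin_gt_0; nra. }
  destruct (Rle_or_lt 0 q) as [Hq0|Hq0].
  - rewrite Rabs_pos_eq in Hq by lra. pose proof (Hpos q Hq). lra.
  - rewrite Rabs_left in Hq by lra. pose proof (Hpos (- q) Hq).
    replace (PI * - q) with (- (PI * q)) in H by ring. rewrite sin_neg in H. lra.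
Qed.

Lemma grid_orthogonality (K m m' : nat) (s : R) : (m < K)%nat -> (m' < K)%nat ->
  fsum K (fun k => cos ((INR m - INR m') * (s + INR k * (2 * PI / INR K)))) =
    (if Nat.eq_dec m m' then INR K else 0) /\
  fsum K (fun k => sin ((INR m - INR m') * (s + INR k * (2 * PI / INR K)))) = 0.
Proof.
  intros Hm Hm'. assert (HK : 0 < INR K) by (apply lt_0_INR; lia).
  destruct (Nat.eq_dec m m') as [<-|Hne].
  - rewrite Rminus_diag. split.
    + rewrite (fsum_ext _ _ (fun _ => 1)), fsum_const; [ring|].
      intros. rewrite Rmult_0_l. apply cos_0.
    + rewrite (fsum_ext _ _ (fun _ => 0)), fsum_const; [ring|].
      intros. rewrite Rmult_0_l. apply sin_0.
  - set (dm := INR m - INR m').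
    set (t := dm * (2 * PI / INR K)).
    assert (Hsin : sin (t / 2) <> 0).
    { replace (t / 2) with (PI * (dm / INR K)) by (unfold t; field; lra).
      apply sin_PI_frac_neq0. unfold Rdiv. rewrite Rabs_mult, Rabs_inv, (Rabs_pos_eq (INR K)) by lra.
      assert (Hdm : 0 < Rabs dm < INR K).
      { unfold dm. split.
        - apply Rabs_pos_lt. intros E. apply Hne, INR_eq. lra.
        - apply lt_INR in Hm, Hm'. pose proof (pos_INR m). pose proof (pos_INR m').
          apply Rabs_def1; lra. }
      split; [apply Rmult_lt_0_compat; [lra | apply Rinv_0_lt_compat; lra]|].
      apply Rmult_lt_reg_r with (INR K); [lra|].
      rewrite Rmult_assoc, Rinv_l by lra. lra. }
    assert (Hshift : dm * s + INR K * t - t / 2 = (dm * s - t / 2) + 2 * PI * (INR m - INR m'))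
      by (unfold t, dm; field; lra).
    destruct (sin_cos_shift_2PI (dm * s - t / 2) m m') as [Es Ec].
    pose proof (cos_grid_telescope K (dm * s) t) as Tc.
    pose proof (sin_grid_telescope K (dm * s) t) as Ts.
    rewrite Hshift, Es in Tc. rewrite Hshift, Ec in Ts.
    assert (Hterm : forall k, dm * (s + INR k * (2 * PI / INR K)) = dm * s + INR k * t)
      by (intros; unfold t; ring).
    rewrite !(fsum_ext K _ _ (fun k _ => f_equal _ (Hterm k))).
    split; apply Rmult_eq_reg_l with (2 * sin (t / 2)); lra.
Qed.


Definition beam_re (M : nat) (fre fim : nat -> R) (psi : R) : R :=
  fsum M (fun m => fre m * cos (INR m * psi) + fim m * sin (INR m * psi)).
Definition beam_im (M : nat) (fre fim : nat -> R) (psi : R) : R :=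
  fsum M (fun m => fre m * sin (INR m * psi) - fim m * cos (INR m * psi)).

Lemma gain_beam (M : nat) (fre fim : nat -> R) (psi : R) : (1 <= M)%nat ->
  gain M fre fim psi = beam_re M fre fim psi ^ 2 + beam_im M fre fim psi ^ 2.
Proof.
  intros HM. unfold gain, beam_re, beam_im. rewrite !sum_f_R0_fsum.
  replace (S (M - 1)) with M by lia. reflexivity.
Qed.

Lemma sqnorm_fsum (M : nat) (fre fim : nat -> R) : (1 <= M)%nat ->
  sqnorm M fre fim = fsum M (fun m => fre m ^ 2 + fim m ^ 2).
Proof.
  intros HM. unfold sqnorm. rewrite sum_f_R0_fsum. replace (S (M - 1)) with M by lia.
  reflexivity.
Qed.

(* Contribution of the antenna pair (m, m') to |f^* a(psi)|^2, namely
   Re(conj(f_m) f_m' e^{j (m - m') psi}). *)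
Definition cross_term (fre fim : nat -> R) (m m' : nat) (psi : R) : R :=
  (fre m * fre m' + fim m * fim m') * cos ((INR m - INR m') * psi)
  + (fim m * fre m' - fre m * fim m') * sin ((INR m - INR m') * psi).

Lemma beam_gain_expand (M : nat) (fre fim : nat -> R) (psi : R) :
  beam_re M fre fim psi ^ 2 + beam_im M fre fim psi ^ 2 =
  fsum M (fun m => fsum M (fun m' => cross_term fre fim m m' psi)).
Proof.
  unfold beam_re, beam_im. rewrite <- !Rsqr_pow2; unfold Rsqr. rewrite !fsum_mul, <- fsum_plus.
  apply fsum_ext; intros m _. rewrite <- fsum_plus. apply fsum_ext; intros m' _.
  unfold cross_term.
  replace ((INR m - INR m') * psi) with (INR m * psi - INR m' * psi) by ring.
  rewrite cos_minus, sin_minus. ring.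
Qed.

(* Parseval on a grid: the gain of f sampled at K >= M equally spaced
   directions sums to K times the squared norm of f, because distinct
   antenna characters are orthogonal on the grid. *)
Lemma gain_grid_sum (M K : nat) (fre fim : nat -> R) (s : R) :
  (1 <= M)%nat -> (M <= K)%nat ->
  fsum K (fun k => gain M fre fim (s + INR k * (2 * PI / INR K))) = INR K * sqnorm M fre fim.
Proof.
  intros HM HMK. rewrite sqnorm_fsum, <- fsum_scal by exact HM.
  rewrite (fsum_ext K _ (fun k => fsum M (fun m => fsum M (fun m' =>
             cross_term fre fim m m' (s + INR k * (2 * PI / INR K)))))).
  2:{ intros k _. rewrite gain_beam, beam_gain_expand by exact HM. reflexivity. }
  rewrite fsum_swap. apply fsum_ext; intros m Hm.
  rewrite fsum_swap, <- (fsum_delta M m (fun m' => INR K * (fre m' ^ 2 + fim m' ^ 2))) by exact Hm.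
  apply fsum_ext; intros m' Hm'. unfold cross_term.
  rewrite fsum_plus, !fsum_scal.
  destruct (grid_orthogonality K m m' s ltac:(lia) ltac:(lia)) as [-> ->].
  destruct (Nat.eq_dec m m') as [<-|]; ring.
Qed.

(* The gain of a beamformer never exceeds M times its squared norm
   (Cauchy-Schwarz, using |e^{j m psi}| = 1). *)
Lemma gain_le_M (M : nat) (fre fim : nat -> R) (psi : R) : (1 <= M)%nat ->
  gain M fre fim psi <= INR M * sqnorm M fre fim.
Proof.
  intros HM. rewrite gain_beam, sqnorm_fsum by exact HM. unfold beam_re, beam_im.
  set (u := fun m => fre m * cos (INR m * psi) + fim m * sin (INR m * psi)).
  set (v := fun m => fre m * sin (INR m * psi) - fim m * cos (INR m * psi)).
  rewrite (fsum_ext M (fun m => fre m ^ 2 + fim m ^ 2) (fun m => u m ^ 2 + v m ^ 2)).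
  - rewrite fsum_plus, Rmult_plus_distr_l.
    pose proof (sqr_fsum_le M u). pose proof (sqr_fsum_le M v). lra.
  - intros m _. pose proof (sin2_cos2 (INR m * psi)) as E. unfold Rsqr in E. unfold u, v.
    transitivity ((fre m ^ 2 + fim m ^ 2)
                  * (sin (INR m * psi) * sin (INR m * psi) + cos (INR m * psi) * cos (INR m * psi)));
      [rewrite E | ]; ring.
Qed.

Lemma gain_nonneg (M : nat) (fre fim : nat -> R) (psi : R) : 0 <= gain M fre fim psi.
Proof. unfold gain. nra. Qed.


Definition lipschitz (L : R) (f : R -> R) : Prop :=
  forall p q, Rabs (f p - f q) <= L * Rabs (p - q).

Definition is_lipschitz (f : R -> R) : Prop := exists L, lipschitz L f.

Lemma lipschitz_const_nonneg (L : R) (f : R -> R) : lipschitz L f -> 0 <= L.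
Proof.
  intros H. specialize (H 1 0). rewrite Rminus_0_r, Rabs_R1, Rmult_1_r in H.
  pose proof (Rabs_pos (f 1 - f 0)). lra.
Qed.

Lemma is_lipschitz_ext (f g : R -> R) :
  (forall x, f x = g x) -> is_lipschitz f -> is_lipschitz g.
Proof. intros E [L H]. exists L. intros p q. rewrite <- !E. apply H. Qed.

Lemma is_lipschitz_lincomb (a b : R) (f g : R -> R) :
  is_lipschitz f -> is_lipschitz g -> is_lipschitz (fun x => a * f x + b * g x).
Proof.
  intros [Lf Hf] [Lg Hg]. exists (Rabs a * Lf + Rabs b * Lg). intros p q.
  replace (a * f p + b * g p - (a * f q + b * g q))
    with (a * (f p - f q) + b * (g p - g q)) by ring.
  eapply Rle_trans; [apply Rabs_triang|]. rewrite !Rabs_mult.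
  pose proof (Hf p q). pose proof (Hg p q).
  pose proof (Rabs_pos a). pose proof (Rabs_pos b). nra.
Qed.

Lemma is_lipschitz_fsum (n : nat) (f : nat -> R -> R) :
  (forall i, is_lipschitz (f i)) -> is_lipschitz (fun x => fsum n (fun i => f i x)).
Proof.
  intros Hf. induction n as [|n IH]; simpl.
  - exists 0. intros p q. rewrite Rminus_0_r, Rabs_R0. lra.
  - apply (is_lipschitz_ext (fun x => 1 * fsum n (fun i => f i x) + 1 * f n x)).
    + intros; ring.
    + apply is_lipschitz_lincomb; auto.
Qed.

Lemma is_lipschitz_sqr (f : R -> R) (B : R) :
  is_lipschitz f -> (forall x, Rabs (f x) <= B) -> is_lipschitz (fun x => f x ^ 2).
Proof.
  intros [L HL] HB. exists (2 * B * L). intros p q.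
  replace (f p ^ 2 - f q ^ 2) with ((f p - f q) * (f p + f q)) by ring.
  rewrite Rabs_mult.
  assert (Hsum : Rabs (f p + f q) <= 2 * B)
    by (eapply Rle_trans; [apply Rabs_triang | pose proof (HB p); pose proof (HB q); lra]).
  pose proof (HL p q). pose proof (lipschitz_const_nonneg L f HL).
  pose proof (Rabs_pos (f p - f q)). pose proof (Rabs_pos (f p + f q)).
  pose proof (Rabs_pos (p - q)). nra.
Qed.

Lemma cos_scaled_lipschitz (r : R) : is_lipschitz (fun x => cos (r * x)).
Proof.
  exists (Rabs r). intros p q.
  destruct (MVT_abs cos (fun c => - sin c) (r * q) (r * p)) as [c [E _]].
  { intros; apply derivable_pt_lim_cos. }
  rewrite E, Rabs_Ropp, <- Rmult_minus_distr_l, Rabs_mult, <- Rmult_assoc.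
  pose proof (SIN_bound c). assert (Rabs (sin c) <= 1) by (apply Rabs_le; lra).
  apply Rmult_le_compat_r; [apply Rabs_pos|].
  pose proof (Rabs_pos r). pose proof (Rabs_pos (sin c)). nra.
Qed.

Lemma sin_scaled_lipschitz (r : R) : is_lipschitz (fun x => sin (r * x)).
Proof.
  exists (Rabs r). intros p q.
  destruct (MVT_abs sin cos (r * q) (r * p)) as [c [E _]].
  { intros; apply derivable_pt_lim_sin. }
  rewrite E, <- Rmult_minus_distr_l, Rabs_mult, <- Rmult_assoc.
  pose proof (COS_bound c). assert (Rabs (cos c) <= 1) by (apply Rabs_le; lra).
  apply Rmult_le_compat_r; [apply Rabs_pos|].
  pose proof (Rabs_pos r). pose proof (Rabs_pos (cos c)). nra.
Qed.

Lemma abs_comb_le (a b u v : R) :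
  Rabs u <= 1 -> Rabs v <= 1 -> Rabs (a * u + b * v) <= Rabs a + Rabs b.
Proof.
  intros Hu Hv. eapply Rle_trans; [apply Rabs_triang|]. rewrite !Rabs_mult.
  pose proof (Rabs_pos a). pose proof (Rabs_pos b).
  pose proof (Rabs_pos u). pose proof (Rabs_pos v). nra.
Qed.

Lemma abs_cos_le_1 (x : R) : Rabs (cos x) <= 1.
Proof. apply Rabs_le, COS_bound. Qed.

Lemma abs_sin_le_1 (x : R) : Rabs (sin x) <= 1.
Proof. apply Rabs_le, SIN_bound. Qed.

(* The gain psi |-> |f^* a(psi)|^2 is Lipschitz: it is the sum of the
   squares of two bounded trigonometric polynomials. *)
Lemma gain_lipschitz (M : nat) (fre fim : nat -> R) : (1 <= M)%nat ->
  is_lipschitz (gain M fre fim).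
Proof.
  intros HM.
  set (B := fsum M (fun m => Rabs (fre m) + Rabs (fim m))).
  apply (is_lipschitz_ext (fun psi => beam_re M fre fim psi ^ 2 + beam_im M fre fim psi ^ 2)).
  { intros psi. symmetry. apply gain_beam, HM. }
  apply (is_lipschitz_ext (fun psi => 1 * beam_re M fre fim psi ^ 2 + 1 * beam_im M fre fim psi ^ 2));
    [intros; ring|].
  apply is_lipschitz_lincomb; apply is_lipschitz_sqr with B; unfold beam_re, beam_im.
  - apply is_lipschitz_fsum. intros m.
    apply is_lipschitz_lincomb; [apply cos_scaled_lipschitz | apply sin_scaled_lipschitz].
  - intros psi. eapply Rle_trans; [apply fsum_abs | apply fsum_le]; intros m _.
    apply abs_comb_le; [apply abs_cos_le_1 | apply abs_sin_le_1].
  - apply is_lipschitz_fsum. intros m.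
    apply (is_lipschitz_ext (fun psi => fre m * sin (INR m * psi) + (- fim m) * cos (INR m * psi)));
      [intros; ring|].
    apply is_lipschitz_lincomb; [apply sin_scaled_lipschitz | apply cos_scaled_lipschitz].
  - intros psi. eapply Rle_trans; [apply fsum_abs | apply fsum_le]; intros m _.
    rewrite <- (Rabs_Ropp (fim m)).
    replace (fre m * sin (INR m * psi) - fim m * cos (INR m * psi))
      with (fre m * sin (INR m * psi) + (- fim m) * cos (INR m * psi)) by ring.
    apply abs_comb_le; [apply abs_sin_le_1 | apply abs_cos_le_1].
Qed.

(* Total gain of the codebook {f_0, ..., f_{N-1}} in direction psi.  It
   dominates the best-codeword gain and, unlike the maximum, sums nicely. *)
Definition total_gain (M : nat) (Fre Fim : nat -> nat -> R) (N : nat) (psi : R) : R :=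
  fsum N (fun i => gain M (Fre i) (Fim i) psi).

Lemma maxgain_le_total (M : nat) (Fre Fim : nat -> nat -> R) (N : nat) (psi : R) :
  maxgain M Fre Fim N psi <= total_gain M Fre Fim N psi.
Proof.
  unfold total_gain. induction N as [|N IH]; simpl; [lra|].
  pose proof (gain_nonneg M (Fre N) (Fim N) psi).
  pose proof (fsum_nonneg N (fun i => gain M (Fre i) (Fim i) psi) (fun i _ => gain_nonneg _ _ _ _)).
  apply Rmax_lub; lra.
Qed.

Lemma maxgain_le_M (M : nat) (Fre Fim : nat -> nat -> R) (N : nat) (psi : R) :
  (1 <= M)%nat -> (forall i, (i < N)%nat -> sqnorm M (Fre i) (Fim i) = 1) ->
  maxgain M Fre Fim N psi <= INR M.
Proof.
  intros HM Hnorm. induction N as [|N IH]; simpl; [apply pos_INR|].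
  apply Rmax_lub; [apply IH; auto|].
  rewrite <- (Rmult_1_r (INR M)), <- (Hnorm N) by lia. apply gain_le_M, HM.
Qed.

Lemma total_gain_lipschitz (M : nat) (Fre Fim : nat -> nat -> R) (N : nat) :
  (1 <= M)%nat -> is_lipschitz (total_gain M Fre Fim N).
Proof.
  intros HM. apply is_lipschitz_fsum with (f := fun i => gain M (Fre i) (Fim i)).
  intros i. apply gain_lipschitz, HM.
Qed.

Lemma total_gain_grid_sum (M K : nat) (Fre Fim : nat -> nat -> R) (N : nat) (s : R) :
  (1 <= M)%nat -> (M <= K)%nat ->
  (forall i, (i < N)%nat -> sqnorm M (Fre i) (Fim i) = 1) ->
  fsum K (fun k => total_gain M Fre Fim N (s + INR k * (2 * PI / INR K))) = INR N * INR K.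
Proof.
  intros HM HMK Hnorm. unfold total_gain. rewrite fsum_swap, <- fsum_const.
  apply fsum_ext; intros i Hi. rewrite gain_grid_sum, Hnorm by auto. ring.
Qed.


Lemma grid_cell (a h y : R) (K : nat) : 0 < h -> (0 < K)%nat ->
  a <= y <= a + INR K * h ->
  exists k, (k < K)%nat /\ a + INR k * h <= y <= a + INR k * h + h.
Proof.
  intros Hh. induction K as [|K IH]; intros HK Hy; [lia|].
  destruct (Nat.eq_dec K 0) as [->|HK0].
  - exists 0%nat. simpl in *. split; [lia | lra].
  - destruct (Rle_dec y (a + INR K * h)) as [Hle|Hgt].
    + destruct IH as [k [Hk Hcell]]; [lia | lra |]. exists k. split; [lia | exact Hcell].
    + exists K. rewrite S_INR in Hy. split; [lia | lra].
Qed.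

Section SelectedCells.
Variables (K : nat) (x : nat -> R) (h : R) (P : nat -> Prop).
Hypothesis P_dec : forall k, {P k} + {~ P k}.

Definition selected (k : nat) : R := if P_dec k then 1 else 0.

Lemma selected_cells_cover (S : R -> Prop) (dl : R) :
  0 <= h -> 0 < dl ->
  (forall y, S y -> exists k, (k < K)%nat /\ P k /\ x k <= y <= x k + h) ->
  cover_sum S ((h + 2 * dl) * fsum K selected).
Proof.
  intros Hh Hdl Hcov.
  set (w := fun n => if lt_dec n K then selected n else 0).
  assert (Hw : forall n, w n = 0 \/ w n = 1).
  { intros n. unfold w, selected. destruct (lt_dec n K); [destruct (P_dec n)|]; auto. }
  exists (fun n => w n * (x n - dl)), (fun n => w n * (x n + h + dl)). split; [|split].
  - intros n. destruct (Hw n) as [-> | ->]; lra.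
  - intros y Sy. destruct (Hcov y Sy) as [k [Hk [Pk Hy]]]. exists k.
    assert (w k = 1) as ->.
    { unfold w, selected. destruct (lt_dec k K); [|lia]. destruct (P_dec k); tauto. }
    lra.
  - rewrite <- fsum_scal.
    replace (fsum K (fun k => (h + 2 * dl) * selected k))
      with (fsum K (fun n => w n * (x n + h + dl) - w n * (x n - dl))).
    + apply infinite_sum_fsum. intros n Hn. unfold w. destruct (lt_dec n K); [lia | ring].
    + apply fsum_ext. intros n Hn. unfold w. destruct (lt_dec n K); [ring | lia].
Qed.

Lemma selected_count_le (g : nat -> R) (t : R) :
  (forall k, (k < K)%nat -> 0 <= g k) -> (forall k, (k < K)%nat -> P k -> t <= g k) ->
  t * fsum K selected <= fsum K g.
Proof.
  intros Hg Ht. rewrite <- fsum_scal. apply fsum_le. intros k Hk. unfold selected.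
  destruct (P_dec k); [rewrite Rmult_1_r; auto | rewrite Rmult_0_r; auto].
Qed.

Lemma selected_cells_measure (S : R -> Prop) (mu t B : R) :
  0 <= h -> outer_measure S mu -> 0 <= t ->
  (forall y, S y -> exists k, (k < K)%nat /\ P k /\ x k <= y <= x k + h) ->
  t * fsum K selected <= B ->
  mu * t <= h * B.
Proof.
  intros Hh [Hmu_le _] Ht Hcov HB.
  assert (Hsel : 0 <= fsum K selected).
  { apply fsum_nonneg. intros k _. unfold selected. destruct (P_dec k); lra. }
  assert (HB0 : 0 <= B) by nra.
  apply le_epsilon. intros eps Heps.
  set (dl := eps / (2 * (B + 1))).
  assert (Hdl : 0 < dl) by (unfold dl; apply Rdiv_lt_0_compat; lra).
  assert (Hdl_small : 2 * dl * B <= eps).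
  { unfold dl. apply Rmult_le_reg_r with (B + 1); [lra|]. field_simplify; nra. }
  pose proof (Hmu_le _ (selected_cells_cover S dl Hh Hdl Hcov)) as Hmu.
  assert (mu * t <= (h + 2 * dl) * (t * fsum K selected)) by nra.
  assert ((h + 2 * dl) * (t * fsum K selected) <= (h + 2 * dl) * B)
    by (apply Rmult_le_compat_l; lra).
  lra.
Qed.

End SelectedCells.

Lemma level_set_grid_bound (M K : nat) (Fre Fim : nat -> nat -> R) (N : nat)
  (S : R -> Prop) (mu c L : R) :
  (1 <= M)%nat -> (M <= K)%nat ->
  (forall i, (i < N)%nat -> sqnorm M (Fre i) (Fim i) = 1) ->
  outer_measure S mu -> 0 <= mu ->
  (forall y, S y -> - PI <= y <= PI /\ c <= maxgain M Fre Fim N y) ->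
  lipschitz L (total_gain M Fre Fim N) ->
  mu * (c - L * (2 * PI / INR K)) <= 2 * PI * INR N.
Proof.
  intros HM HMK Hnorm Hom Hmu HS HL.
  pose proof PI_RGT_0 as Hpi. pose proof (pos_INR N) as HN.
  assert (HK : 0 < INR K) by (apply lt_0_INR; lia).
  set (h := 2 * PI / INR K).
  assert (Hh : 0 < h) by (unfold h; apply Rdiv_lt_0_compat; lra).
  assert (HKh : INR K * h = 2 * PI) by (unfold h; field; lra).
  set (t := c - L * h).
  destruct (Rlt_or_le t 0) as [Ht|Ht]; [nra|].
  set (G := total_gain M Fre Fim N).
  set (x := fun k => - PI + INR k * h).
  set (P := fun k => t <= G (x k)).
  set (P_dec := fun k => Rle_dec t (G (x k))).
  assert (Hcells : forall y, S y -> exists k, (k < K)%nat /\ P k /\ x k <= y <= x k + h).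
  { intros y Sy. destruct (HS y Sy) as [Hy Hcy].
    destruct (grid_cell (- PI) h y K Hh ltac:(lia)) as [k [Hk Hcell]]; [lra|].
    exists k. split; [exact Hk|]. split; [|exact Hcell].
    assert (Hdist : Rabs (G y - G (x k)) <= L * h).
    { eapply Rle_trans; [apply HL|].
      apply Rmult_le_compat_l; [exact (lipschitz_const_nonneg L G HL)|].
      apply Rabs_le. unfold x. lra. }
    pose proof (maxgain_le_total M Fre Fim N y). pose proof (Rle_abs (G y - G (x k))).
    unfold P, t. unfold G in *. lra. }
  assert (Hcount : t * fsum K (selected P P_dec) <= INR N * INR K).
  { rewrite <- (total_gain_grid_sum M K Fre Fim N (- PI)) by auto.
    apply selected_count_le; [|intros k _ Pk; exact Pk].
    intros k _. apply fsum_nonneg. intros; apply gain_nonneg. }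
  replace (2 * PI * INR N) with (h * (INR N * INR K)) by (rewrite <- HKh; ring).
  exact (selected_cells_measure K x h P P_dec S mu t _ ltac:(lra) Hom Ht Hcells Hcount).
Qed.

Lemma level_set_measure_bound (M : nat) (Fre Fim : nat -> nat -> R) (N : nat)
  (S : R -> Prop) (mu c : R) :
  (1 <= M)%nat ->
  (forall i, (i < N)%nat -> sqnorm M (Fre i) (Fim i) = 1) ->
  outer_measure S mu -> 0 <= mu ->
  (forall y, S y -> - PI <= y <= PI /\ c <= maxgain M Fre Fim N y) ->
  mu * c <= 2 * PI * INR N.
Proof.
  intros HM Hnorm Hom Hmu HS.
  destruct (total_gain_lipschitz M Fre Fim N HM) as [L HL].
  pose proof (lipschitz_const_nonneg _ _ HL) as HL0. pose proof PI_RGT_0 as Hpi.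
  apply le_epsilon. intros eps Heps.
  destruct (INR_unbounded (INR M + 2 * PI * mu * L / eps)) as [K HK].
  assert (Hres : 0 <= 2 * PI * mu * L / eps).
  { unfold Rdiv. apply Rmult_le_pos; [|left; apply Rinv_0_lt_compat; lra].
    apply Rmult_le_pos; [apply Rmult_le_pos|]; lra. }
  assert (HMK : (M <= K)%nat) by (apply INR_le; lra).
  assert (HK0 : 0 < INR K) by (pose proof (pos_INR M); lra).
  pose proof (level_set_grid_bound M K Fre Fim N S mu c L HM HMK Hnorm Hom Hmu HS HL) as Hgrid.
  assert (Herr : mu * (L * (2 * PI / INR K)) <= eps).
  { replace (mu * (L * (2 * PI / INR K))) with ((2 * PI * mu * L / eps) * eps / INR K)
      by (field; lra).
    apply Rle_trans with (INR K * eps / INR K); [|right; field; lra].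
    unfold Rdiv. apply Rmult_le_compat_r; [left; apply Rinv_0_lt_compat; lra|].
    apply Rmult_le_compat_r; [lra|]. pose proof (pos_INR M). lra. }
  nra.
Qed.

Theorem lemma1 (M : nat) (d lambda : R) (T : R -> Prop)
  (N : nat) (Fre Fim : nat -> nat -> R) :
  (1 <= M)%nat -> 0 < d -> 0 < lambda ->
  lebesgue_measurable T ->
  (1 <= N)%nat ->
  (forall i, (i < N)%nat -> sqnorm M (Fre i) (Fim i) = 1) ->
  (exists psi, Pset d lambda T psi /\ - PI <= psi <= PI) ->
  forall mu : R,
  outer_measure (fun psi => Pset d lambda T psi /\ - PI <= psi <= PI) mu ->
  forall chi : R,
  is_inf (fun v => exists psi, (Pset d lambda T psi /\ - PI <= psi <= PI) /\
                              v = maxgain M Fre Fim N psi) chi ->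
  chi <= INR M /\ (0 < mu -> chi <= 2 * PI * INR N / mu).
Proof.
  intros HM _ _ _ _ Hnorm [psi0 Hpsi0] mu Hom chi [Hchi_lower _].
  assert (Hchi : forall y, Pset d lambda T y /\ - PI <= y <= PI ->
                           chi <= maxgain M Fre Fim N y)
    by (intros y Hy; apply Hchi_lower; exists y; auto).
  split.
  - eapply Rle_trans; [apply Hchi, Hpsi0 | apply maxgain_le_M; auto].
  - intros Hmu.
    assert (Hbound : mu * chi <= 2 * PI * INR N).
    { apply (level_set_measure_bound M Fre Fim N _ mu chi HM Hnorm Hom); [lra|].
      intros y Hy. split; [apply Hy | apply Hchi, Hy]. }
    apply Rmult_le_reg_r with mu; [exact Hmu|].
    replace (2 * PI * INR N / mu * mu) with (2 * PI * INR N) by (field; lra). lra.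
Qed.
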